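(* If $(A_n)_{n=0}^\infty$ is an Appell sequence, then $A_n^{**}=A_n$ for all $n\geq0$.
   Context: An Appell sequence is a sequence of polynomials $(A_n)_{n\ge0}$ with $A_0=1$ and $A_n'=nA_{n-1}$ for $n\ge1$. For a partition $\lambda$ of length $r$, let $(n_1,\dots,n_r)=(\lambda_r,\lambda_{r-1}+1,\dots,\lambda_1+r-1)$ and $A_\lambda=\operatorname{Wr}[A_{n_1},\dots,A_{n_r}]/\Delta(n_1,\dots,n_r)$, where $\operatorname{Wr}$ is the Wronskian and $\Delta$ the Vandermonde determinant $\prod_{i<j}(x_j-x_i)$. The dual sequence $A^*$ is defined by $A^*_n=A_{(1^n)}$, with $(1^n)=(1,\dots,1)$ ($n$ ones); it is again an Appell sequence, and $A^{**}=(A^* )^*$. *)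

From mathcomp Require Import all_boot all_order all_algebra.
Set Implicit Arguments. Unset Strict Implicit. Unset Printing Implicit Defensive.
Import GRing.Theory.
Local Open Scope ring_scope.

Section Appell.
Variable R : fieldType.

Definition appell (A : nat -> {poly R}) : Prop :=
  A 0%N = 1 /\ forall n : nat, (A n.+1)^`() = (n.+1)%:R *: A n.

Definition wronskian (s : seq {poly R}) : {poly R} :=
  \det (\matrix_(i < size s, j < size s) (nth 0 s j)^`(i)).

Definition vandermonde (s : seq nat) : R :=
  \prod_(i < size s) \prod_(j < size s | (i < j)%N)
     ((nth 0%N s j)%:R - (nth 0%N s i)%:R).

Definition is_partition (la : seq nat) : bool :=
  sorted geq la && all (fun k => 0 < k)%N la.

Definition part_degrees (la : seq nat) : seq nat :=
  [seq (nth 0%N la (size la - 1 - i) + i)%N | i <- iota 0 (size la)].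

Definition appell_schur (A : nat -> {poly R}) (la : seq nat) : {poly R} :=
  let ns := part_degrees la in
  (vandermonde ns)^-1 *: wronskian (map A ns).

Definition appell_dual (A : nat -> {poly R}) : nat -> {poly R} :=
  fun n => appell_schur A (nseq n 1%N).

End Appell.

(* Write A_k = k! a_k, so that a_0 = 1 and a_{k+1}' = a_k.  The Wronskian
   defining A^*_n factors as a Vandermonde-type constant times the
   determinant b_n of the Toeplitz-Hessenberg matrix (a_{j-i+1}), and the
   constant cancels the Vandermonde determinant: A^*_n = n! b_n.  Expanding
   that determinant along its first column gives the convolution identity
   sum_k (-1)^k a_k b_{n-k} = [n = 0], i.e. b is the sequence of
   coefficients of 1/a(-t).  Differentiating it shows that b_0 = 1 and
   b_{n+1}' = b_n, so A^{**}_n = n! c_n where c is obtained from b as b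
   from a.  The identity is symmetric in a and b up to the sign (-1)^n,
   and it determines its second argument from its first, hence c = a. *)

From mathcomp Require Import all_boot all_order all_algebra.
From mathcomp Require Import zify ring.
Set Implicit Arguments. Unset Strict Implicit. Unset Printing Implicit Defensive.
Import GRing.Theory.

Lemma prod_subn_fact n : (\prod_(i < n) (n - i) = n`!)%N.
Proof.
elim: n => [|n IHn]; first by rewrite big_ord0.
by rewrite big_ord_recl subn0 factS -IHn.
Qed.

Lemma prod_pairs_subn_fact n :
  (\prod_(i < n) \prod_(j < n | i < j) (j - i) = \prod_(i < n) i`!)%N.
Proof.
elim: n => [|n IHn]; first by rewrite !big_ord0.
have no_gt_last : \prod_(j < n.+1 | n < j) (j - n) = 1.
  by rewrite big_pred0 // => j; rewrite ltnNge -ltnS ltn_ord.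
rewrite !big_ord_recr /= no_gt_last muln1 -IHn -prod_subn_fact -big_split /=.
apply: eq_bigr => i _.
by rewrite big_mkcond big_ord_recr /= ltn_ord -big_mkcond.
Qed.

Lemma prod_factS n : (\prod_(j < n) j.+1`! = n`! * \prod_(j < n) j`!)%N.
Proof.
elim: n => [|n IHn]; first by rewrite !big_ord0.
by rewrite !big_ord_recr /= IHn factS; ring.
Qed.

Local Open Scope ring_scope.

Section SignedConvolution.
Variable T : comNzRingType.

(* The n-th coefficient of c(-t) x(t). *)
Definition sconv (c x : nat -> T) (n : nat) : T :=
  \sum_(k < n.+1) (-1) ^+ k * c k * x (n - k)%N.

Lemma eq_sconv (c1 c2 x1 x2 : nat -> T) n :
  c1 =1 c2 -> x1 =1 x2 -> sconv c1 x1 n = sconv c2 x2 n.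
Proof. by move=> eq_c eq_x; apply: eq_bigr => k _; rewrite eq_c eq_x. Qed.

Lemma sconv_recl (c x : nat -> T) n :
  sconv c x n.+1 = c 0%N * x n.+1 - sconv (fun k => c k.+1) x n.
Proof.
rewrite /sconv big_ord_recl expr0 mul1r subn0 -sumrN; congr (_ + _).
by apply: eq_bigr => k _; rewrite exprS subSS !mulN1r !mulNr.
Qed.

Lemma sconv_recr0 (c x : nat -> T) n :
  x 0%N = 0 -> sconv c x n.+1 = sconv c (fun m => x m.+1) n.
Proof.
move=> x0; rewrite /sconv big_ord_recr /= subnn x0 mulr0 addr0.
by apply: eq_bigr => k _; rewrite subSn // -ltnS.
Qed.

Lemma sconv_inj (c x y : nat -> T) : c 0%N = 1 ->
  (forall n, sconv c x n = sconv c y n) -> forall n, x n = y n.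
Proof.
move=> c0 eq_xy; elim/ltn_ind => n IHn.
have := eq_xy n; rewrite /sconv !big_ord_recl expr0 c0 !mul1r subn0.
under eq_bigr => i _ do rewrite IHn ?subnSK ?leq_subr //.
by move/addIr.
Qed.

Lemma sconvC (a b : nat -> T) n : sconv b a n = (-1) ^+ n * sconv a b n.
Proof.
rewrite /sconv mulr_sumr (reindex_inj rev_ord_inj) /=; apply: eq_bigr => k _.
have le_kn : (k <= n)%N by rewrite -ltnS.
have -> : (-1) ^+ n = (-1) ^+ (n - k) * (-1) ^+ k :> T by rewrite -exprD subnK.
by rewrite subSS subKn // -!mulrA signrMK [b _ * _]mulrC.
Qed.

End SignedConvolution.

Section ToeplitzHessenberg.
Variable T : comNzRingType.
Variable a : nat -> T.
Hypothesis a0 : a 0%N = 1.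

Definition hess_entry (i j : nat) : T :=
  if (i <= j.+1)%N then a (j.+1 - i) else 0.

Definition hess_det (n : nat) : T :=
  \det (\matrix_(i < n, j < n) hess_entry i j).

Definition hess_det_row (s : nat -> T) (n : nat) : T :=
  \det (\matrix_(i < n, j < n) if i == 0 :> nat then s j else hess_entry i j).

Lemma hess_det0 : hess_det 0 = 1.
Proof. exact: det_mx00. Qed.

(* Laplace expansion along the first column, whose only nonzero entries
   are s 0 and a 0 = 1. *)
Lemma hess_det_rowSS s n :
  hess_det_row s n.+2 = s 0%N * hess_det n.+1 - hess_det_row (fun k => s k.+1) n.+1.
Proof.
rewrite /hess_det_row /hess_det (expand_det_col _ ord0) !big_ord_recl big1; last first.
  by move=> i _; rewrite !mxE /hess_entry /= mul0r.
rewrite addr0 /cofactor !mxE /hess_entry /= a0 !mul1r expr1 mulN1r.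
congr (_ * _ + - _); congr (\det _); apply/matrixP => i j; rewrite !mxE.
  by rewrite !lift0 /= ltnS subSS.
by case: i => [[|i] ?].
Qed.

Lemma hess_det_rowE s n : hess_det_row s n.+1 = sconv s hess_det n.
Proof.
elim: n s => [|n IHn] s.
  rewrite /hess_det_row /hess_det /sconv (expand_det_col _ ord0) !big_ord1.
  by rewrite /cofactor !mxE !det_mx00 /= expr0 !mulr1 mul1r.
by rewrite hess_det_rowSS IHn sconv_recl.
Qed.

Lemma sconv_hess_det n : sconv a hess_det n = (n == 0%N)%:R.
Proof.
case: n => [|n]; first by rewrite /sconv big_ord1 hess_det0 a0 !mul1r.
rewrite sconv_recl a0 mul1r -hess_det_rowE; apply/eqP; rewrite subr_eq0; apply/eqP.
congr (\det _); apply/matrixP => i j; rewrite !mxE /hess_entry.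
by case: (nat_of_ord i) => [|i'] //=; rewrite subn0.
Qed.

End ToeplitzHessenberg.

Section DividedPowerSequence.
Variable R : comNzRingType.

Lemma deriv_sconv (c x : nat -> {poly R}) n :
  (sconv c x n)^`() = sconv (deriv \o c) x n + sconv c (deriv \o x) n.
Proof.
rewrite raddf_sum -big_split; apply: eq_bigr => k _ /=.
by rewrite -mulrA raddfMsign /= derivM mulrDr !mulrA.
Qed.

Variable a : nat -> {poly R}.
Hypothesis a0 : a 0%N = 1.
Hypothesis deriv_aS : forall k, (a k.+1)^`() = a k.

Lemma derivn_divided i m : (a m)^`(i) = if (i <= m)%N then a (m - i) else 0.
Proof.
elim: i m => [|i IHi] m; first by rewrite derivn0 subn0.
rewrite derivnS IHi; case: (ltngtP i m) => [lt_im|lt_mi|->].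
- by rewrite -(subnSK lt_im) deriv_aS.
- by rewrite raddf0.
- by rewrite subnn a0 -polyC1 derivC.
Qed.

(* Differentiating [sconv a hess_det (n+1) = 0] shows that the sequences
   hess_det' (n+1) and hess_det n have the same convolution with a. *)
Lemma deriv_hess_detS n : (hess_det a n.+1)^`() = hess_det a n.
Proof.
have deriv1 : (1 : {poly R})^`() = 0 by rewrite -polyC1 derivC.
move: n; apply: (sconv_inj a0) => n.
have := congr1 deriv (sconv_hess_det a0 n.+1).
rewrite -polyC_natr derivC deriv_sconv sconv_recl /= a0 deriv1 mul0r sub0r.
rewrite (eq_sconv _ deriv_aS (frefl _)) sconv_recr0 /= ?hess_det0 ?deriv1 //.
by move/eqP; rewrite addrC subr_eq0 => /eqP.
Qed.

End DividedPowerSequence.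

Section Dual.
Variable R : fieldType.
Hypothesis charR0 : [pchar R] =i pred0.

Lemma natr_neq0 n : (0 < n)%N -> (n%:R : R) != 0.
Proof. by move/GRing.pcharf0P: charR0 => ->; rewrite -lt0n. Qed.

Lemma part_degrees_nseq1 n : part_degrees (nseq n 1%N) = iota 1 n.
Proof.
rewrite /part_degrees size_nseq.
apply: (@eq_from_nth _ 0%N); first by rewrite size_map !size_iota.
rewrite size_map size_iota => i lt_in.
rewrite (nth_map 0%N) ?size_iota // !nth_iota // nth_nseq.
by have -> : (n - 1 - (0 + i) < n)%N by lia; lia.
Qed.

Lemma vandermonde_iota1 n : vandermonde R (iota 1 n) = (\prod_(i < n) i`!)%:R.
Proof.
rewrite /vandermonde size_iota -prod_pairs_subn_fact natr_prod; apply: eq_bigr => i _.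
rewrite natr_prod; apply: eq_bigr => j lt_ij.
by rewrite !nth_iota // natrB ?(ltnW lt_ij) // !natrD; ring.
Qed.

Lemma wronskian_iota1 (A a : nat -> {poly R}) :
    (forall k, A k = k`!%:R *: a k) -> a 0%N = 1 ->
    (forall k, (a k.+1)^`() = a k) ->
  forall n, wronskian (map A (iota 1 n)) = hess_det a n * (\prod_(j < n) j.+1`!)%:R.
Proof.
move=> Aa a0 deriv_aS n; rewrite /wronskian size_map size_iota.
have -> : \matrix_(i < n, j < n) (nth 0 (map A (iota 1 n)) j)^`(i) =
          (\matrix_(i < n, j < n) hess_entry a i j) *m diag_mx (\row_(j < n) (j.+1`!)%:R).
  rewrite mul_mx_diag; apply/matrixP => i j; rewrite !mxE.
  rewrite (nth_map 0%N) ?size_iota // nth_iota // add1n Aa derivnZ (derivn_divided a0 deriv_aS).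
  by rewrite scaler_nat mulr_natr.
rewrite det_mulmx det_diag natr_prod; congr (_ * _).
by apply: eq_bigr => j _; rewrite mxE.
Qed.

Lemma appell_dual_hess_det (A a : nat -> {poly R}) :
    (forall k, A k = k`!%:R *: a k) -> a 0%N = 1 ->
    (forall k, (a k.+1)^`() = a k) ->
  forall n, appell_dual A n = n`!%:R *: hess_det a n.
Proof.
move=> Aa a0 deriv_aS n.
rewrite /appell_dual /appell_schur part_degrees_nseq1 (wronskian_iota1 Aa a0 deriv_aS).
rewrite vandermonde_iota1 prod_factS mulr_natr -scaler_nat scalerA natrM.
rewrite mulrCA mulVf ?mulr1 // natr_prod; apply/prodf_neq0 => i _; exact/natr_neq0/fact_gt0.
Qed.

Definition divided (A : nat -> {poly R}) (k : nat) : {poly R} := (k`!%:R : R)^-1 *: A k.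

Lemma dividedK A k : A k = k`!%:R *: divided A k.
Proof. by rewrite scalerA divff ?scale1r //; exact/natr_neq0/fact_gt0. Qed.

Lemma divided_appell A : appell A ->
  divided A 0%N = 1 /\ forall k, (divided A k.+1)^`() = divided A k.
Proof.
move=> [A0 deriv_AS]; split; first by rewrite /divided A0 invr1 scale1r.
move=> k; rewrite /divided derivZ deriv_AS scalerA factS natrM invfM.
by rewrite mulrAC mulVf ?mul1r // natr_neq0.
Qed.

End Dual.

Theorem corollary5p6 (R : fieldType) (charR0 : [pchar R] =i pred0)
  (A : nat -> {poly R}) :
  appell A -> forall n : nat, appell_dual (appell_dual A) n = A n.
Proof.
move=> /(divided_appell charR0) [a0 deriv_aS] n; set a := divided A.
have dualA := appell_dual_hess_det charR0 (dividedK charR0 A) a0 deriv_aS.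
have := appell_dual_hess_det charR0 dualA (hess_det0 a) (deriv_hess_detS a0 deriv_aS).
move=> ->; rewrite (dividedK charR0 A n); congr (_ *: _).
apply: (sconv_inj (hess_det0 a)) => m.
rewrite sconv_hess_det ?hess_det0 // sconvC sconv_hess_det //.
by case: m => [|m]; rewrite ?expr0 ?mul1r ?mulr0.
Qed.
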